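(* A countable locally finite group $G$ is finite if and only if $\operatorname{asdim}_{AN}(G,d_G)=0$ for every proper left invariant metric $d_G$ on $G$.
   Context: A group is locally finite if every finitely generated subgroup is finite. A metric $d_G$ on $G$ is proper left invariant if $d_G(gh,gk)=d_G(h,k)$ for all $g,h,k$ and every ball is finite. $\operatorname{asdim}_{AN}(X)=0$ means there are constants $C>0$, $k\in\mathbb{R}$ such that for every $s>0$ each $s$-scale connected component of $X$ (class of the relation ''joined by a finite chain $x_0,\dots,x_m$ with $d(x_i,x_{i+1})<s$'') has diameter at most $Cs+k$. *)

From Stdlib Require Import Reals List.
Open Scope R_scope.

Set Implicit Arguments.

Definition is_group (G : Type) (mul : G -> G -> G) (inv : G -> G) (e : G) : Prop :=
  (forall x y z, mul x (mul y z) = mul (mul x y) z) /\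
  (forall x, mul e x = x) /\ (forall x, mul x e = x) /\
  (forall x, mul (inv x) x = e) /\ (forall x, mul x (inv x) = e).

Definition finite_set (G : Type) (P : G -> Prop) : Prop :=
  exists l : list G, forall x, P x -> In x l.

Definition finite_type (G : Type) : Prop := exists l : list G, forall x : G, In x l.

Definition countable_type (G : Type) : Prop :=
  exists f : G -> nat, forall x y, f x = f y -> x = y.

Inductive gen_subgroup (G : Type) (mul : G -> G -> G) (inv : G -> G) (e : G)
    (gens : list G) : G -> Prop :=
  | gen_unit : gen_subgroup mul inv e gens e
  | gen_base : forall x, In x gens -> gen_subgroup mul inv e gens x
  | gen_mul : forall x y, gen_subgroup mul inv e gens x ->
      gen_subgroup mul inv e gens y -> gen_subgroup mul inv e gens (mul x y)
  | gen_inv : forall x, gen_subgroup mul inv e gens x ->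
      gen_subgroup mul inv e gens (inv x).

Definition locally_finite (G : Type) (mul : G -> G -> G) (inv : G -> G) (e : G) : Prop :=
  forall gens : list G, finite_set (gen_subgroup mul inv e gens).

Definition is_metric (G : Type) (d : G -> G -> R) : Prop :=
  (forall x y, 0 <= d x y) /\
  (forall x y, d x y = 0 <-> x = y) /\
  (forall x y, d x y = d y x) /\
  (forall x y z, d x z <= d x y + d y z).

Definition proper_left_invariant_metric (G : Type) (mul : G -> G -> G)
    (d : G -> G -> R) : Prop :=
  is_metric d /\
  (forall g h k, d (mul g h) (mul g k) = d h k) /\
  (forall x r, finite_set (fun y => d x y <= r)).

(* x and y lie in the same s-scale connected component: joined by a finite
   chain x = x_0, ..., x_m = y with d(x_i, x_{i+1}) < s. *)
Inductive scale_chain (G : Type) (d : G -> G -> R) (s : R) : G -> G -> Prop :=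
  | chain_refl : forall x, scale_chain d s x x
  | chain_step : forall x y z, scale_chain d s x y -> d y z < s ->
      scale_chain d s x z.

(* asdim_AN(X) = 0: there are C > 0 and k such that for every s > 0 each
   s-scale connected component has diameter at most C s + k
   (diameter <= bound  iff  all pairwise distances in it are <= bound). *)
Definition asdimAN_zero (G : Type) (d : G -> G -> R) : Prop :=
  exists C k : R, 0 < C /\
    forall s, 0 < s -> forall x y, scale_chain d s x y -> d x y <= C * s + k.

From Stdlib Require Import Reals List.
From Stdlib Require Import Lia Lra Wf_nat Classical ClassicalEpsilon.

(* If G is finite, every metric on G is bounded, and a bounded metric has
   asdim_AN = 0 with C = 1 and k = its bound.

   Conversely, suppose G is infinite.  Being locally finite, G is then not
   finitely generated, and we build a single proper left invariant metric
   violating asdim_AN = 0 (this works for any countable group that is not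
   finitely generated).  Choose increasing finite lists of letters
   [level j]: level j contains level (j-1), the j-th element of an
   enumeration of G, and 2^j elements, each outside the subgroup generated by
   the previous ones.  Each such fresh element doubles a subset of the
   generated subgroup, so <level j> has at least 2^(2^j) elements, while
   level j has at most 2^(j+2).  Give the letters of level L weight L and let
   wlen g be the least L such that g is a product of at most L letters of
   level L and their inverses; d(x,y) = wlen(x^-1 y) is a proper left
   invariant metric.  All of <level j> lies in the (j+2)-scale component of e,
   so a bound C s + k on component diameters puts <level j> inside the words
   of length D = O(j) over at most 2^(D+3) letters: at most 2^((D+4)D)
   elements, which is less than 2^(2^j) for large j. *)

Local Open Scope nat_scope.

Lemma cube_lt_pow2 n : 14 <= n -> 4 * n ^ 3 < 2 ^ n.
Proof.
  induction 1 as [|m Hm IH].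
  - apply Nat.ltb_lt; reflexivity.
  - assert (Hcube : (S m) ^ 3 <= 2 * m ^ 3).
    { replace ((S m) ^ 3) with (m * m * m + 3 * (m * m) + 3 * m + 1)
        by (cbn [Nat.pow]; ring).
      replace (m ^ 3) with (m * m * m) by (cbn [Nat.pow]; ring).
      assert (m * m >= 14 * m) by (apply Nat.mul_le_mono_r; exact Hm).
      assert (m * m * m >= 14 * (m * m))
        by (rewrite (Nat.mul_comm (m * m) m); apply Nat.mul_le_mono_r; exact Hm).
      lia. }
    rewrite (Nat.pow_succ_r' 2 m). lia.
Qed.

(* For every slope M the level j eventually outgrows the count of words of
   length M (j + 3). *)
Lemma exponential_beats_quadratic (M : nat) :
  exists j, (M * (j + 3) + 4) * (M * (j + 3)) < 2 ^ j.
Proof.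
  exists (M * M + 20). set (j := M * M + 20).
  destruct M as [|M'].
  - apply Nat.neq_0_lt_0, Nat.pow_nonzero. discriminate.
  - set (M := S M') in *.
    pose proof (cube_lt_pow2 j ltac:(lia)) as Hj.
    assert (HMj : M * M <= j) by lia.
    assert (HM : M <= j) by nia.
    assert (Hfac : M * (j + 3) + 4 <= 2 * (j * M)) by nia.
    assert (Hsq : (2 * (j * M)) * (2 * (j * M)) <= 4 * j ^ 3).
    { replace ((2 * (j * M)) * (2 * (j * M))) with (4 * (j * j) * (M * M)) by ring.
      replace (4 * j ^ 3) with (4 * (j * j) * j) by (cbn [Nat.pow]; ring).
      apply Nat.mul_le_mono_l. exact HMj. }
    assert (Hprod : (M * (j + 3) + 4) * (M * (j + 3)) <= (2 * (j * M)) * (2 * (j * M)))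
      by (apply Nat.mul_le_mono; lia).
    lia.
Qed.

Lemma finite_type_bounded (X : Type) (d : X -> X -> R) :
  finite_type X -> exists K, forall x y, (d x y <= K)%R.
Proof.
  intros [l Hl].
  assert (Hlist : forall l' : list (X * X), exists K, forall p, In p l' -> (d (fst p) (snd p) <= K)%R).
  { induction l' as [|p l' [K HK]].
    - exists 0%R. intros p [].
    - exists (Rmax (d (fst p) (snd p)) K). intros q [<-|Hq].
      + apply Rmax_l.
      + eapply Rle_trans; [apply HK, Hq | apply Rmax_r]. }
  destruct (Hlist (list_prod l l)) as [K HK].
  exists K. intros x y. apply (HK (x, y)), in_prod; apply Hl.
Qed.

Lemma bounded_asdimAN_zero (X : Type) (d : X -> X -> R) :
  (exists K, forall x y, (d x y <= K)%R) -> asdimAN_zero d.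
Proof.
  intros [K HK]. exists 1%R, K. split; [lra|].
  intros s Hs x y _. specialize (HK x y). lra.
Qed.

Section Chains.
Variables (X : Type) (d : X -> X -> R) (s : R).

Lemma scale_chain_trans x y z :
  scale_chain d s x y -> scale_chain d s y z -> scale_chain d s x z.
Proof.
  intros Hxy Hyz. induction Hyz as [|y z w _ IH Hzw]; [exact Hxy|].
  exact (chain_step w (IH Hxy) Hzw).
Qed.

Lemma scale_chain_sym x y :
  (forall u v, d u v = d v u) -> scale_chain d s x y -> scale_chain d s y x.
Proof.
  intros Hsym Hxy. induction Hxy as [x|x y z _ IH Hyz]; [constructor|].
  apply scale_chain_trans with y; [|exact IH].
  apply chain_step with z; [constructor|]. rewrite Hsym. exact Hyz.
Qed.

Lemma scale_chain_translate (mul : X -> X -> X) g x y :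
  (forall a b c, d (mul a b) (mul a c) = d b c) ->
  scale_chain d s x y -> scale_chain d s (mul g x) (mul g y).
Proof.
  intros Hinv Hxy. induction Hxy as [x|x y z _ IH Hyz]; [constructor|].
  apply chain_step with (mul g y); [exact IH|]. rewrite Hinv. exact Hyz.
Qed.

End Chains.

Section GroupFacts.
Variables (G : Type) (mul : G -> G -> G) (inv : G -> G) (e : G).
Hypothesis group : is_group mul inv e.

Local Notation Gen l := (gen_subgroup mul inv e l).

Lemma grp_assoc x y z : mul x (mul y z) = mul (mul x y) z.
Proof. apply group. Qed.
Lemma grp_mul_1l x : mul e x = x.
Proof. apply group. Qed.
Lemma grp_mul_1r x : mul x e = x.
Proof. apply group. Qed.
Lemma grp_mul_Vl x : mul (inv x) x = e.
Proof. apply group. Qed.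
Lemma grp_mul_Vr x : mul x (inv x) = e.
Proof. apply group. Qed.

Lemma grp_inv_unique x y : mul x y = e -> y = inv x.
Proof.
  intros Hxy.
  rewrite <- (grp_mul_1l y), <- (grp_mul_Vl x), <- grp_assoc, Hxy, grp_mul_1r.
  reflexivity.
Qed.

Lemma grp_inv_1 : inv e = e.
Proof. symmetry. apply grp_inv_unique, grp_mul_1l. Qed.

Lemma grp_inv_inv x : inv (inv x) = x.
Proof. symmetry. apply grp_inv_unique, grp_mul_Vl. Qed.

Lemma grp_inv_mul x y : inv (mul x y) = mul (inv y) (inv x).
Proof.
  symmetry. apply grp_inv_unique.
  rewrite <- grp_assoc, (grp_assoc y), grp_mul_Vr, grp_mul_1l, grp_mul_Vr.
  reflexivity.
Qed.

Lemma grp_cancel_l a x y : mul a x = mul a y -> x = y.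
Proof.
  intros Hxy.
  rewrite <- (grp_mul_1l x), <- (grp_mul_1l y), <- (grp_mul_Vl a), <- !grp_assoc, Hxy.
  reflexivity.
Qed.

Lemma grp_quotient_translate g x y : mul (inv (mul g x)) (mul g y) = mul (inv x) y.
Proof.
  rewrite grp_inv_mul, <- grp_assoc, (grp_assoc (inv g)), grp_mul_Vl, grp_mul_1l.
  reflexivity.
Qed.

Lemma gen_subgroup_incl (l l' : list G) x : incl l l' -> Gen l x -> Gen l' x.
Proof.
  intros Hll' Hx. induction Hx as [|x Hx|x y _ IHx _ IHy|x _ IHx].
  - apply gen_unit.
  - apply gen_base, Hll', Hx.
  - apply gen_mul; assumption.
  - apply gen_inv; assumption.
Qed.

Lemma gen_subgroup_in_component (d : G -> G -> R) (s : R) (l : list G) :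
  (forall x y, d x y = d y x) ->
  (forall g x y, d (mul g x) (mul g y) = d x y) ->
  (forall x, In x l -> (d e x < s)%R) ->
  forall g, Gen l g -> scale_chain d s e g.
Proof.
  intros Hsym Hinv Hl g Hg. induction Hg as [|x Hx|x y _ IHx _ IHy|x _ IHx].
  - constructor.
  - apply chain_step with e; [constructor | apply Hl, Hx].
  - apply scale_chain_trans with x; [exact IHx|].
    rewrite <- (grp_mul_1r x) at 1. apply scale_chain_translate; assumption.
  - apply scale_chain_sym; [exact Hsym|].
    rewrite <- (grp_mul_Vl x), <- (grp_mul_1r (inv x)) at 1.
    apply scale_chain_translate; assumption.
Qed.

Section LengthMetric.
Variable len : G -> nat.
Hypothesis len_e : len e = 0.
Hypothesis len_zero : forall g, len g = 0 -> g = e.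
Hypothesis len_inv : forall g, len (inv g) <= len g.
Hypothesis len_mul : forall g h, len (mul g h) <= len g + len h.
Hypothesis len_balls : forall N, finite_set (fun g => len g <= N).

Definition len_dist (x y : G) : R := INR (len (mul (inv x) y)).

Lemma len_dist_proper : proper_left_invariant_metric mul len_dist.
Proof.
  unfold len_dist. split; [split; [|split; [|split]] | split].
  - intros x y. apply pos_INR.
  - intros x y. split.
    + intros Hxy. change 0%R with (INR 0) in Hxy. apply INR_eq, len_zero in Hxy.
      rewrite <- (grp_mul_1l y), <- (grp_mul_Vr x), <- grp_assoc, Hxy, grp_mul_1r.
      reflexivity.
    + intros <-. rewrite grp_mul_Vl, len_e. reflexivity.
  - intros x y. f_equal.
    assert (Hlen_inv : forall g, len (inv g) = len g).
    { intros g. apply Nat.le_antisymm; [apply len_inv|].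
      rewrite <- (grp_inv_inv g) at 1. apply len_inv. }
    rewrite <- Hlen_inv, grp_inv_mul, grp_inv_inv. reflexivity.
  - intros x y z. rewrite <- plus_INR. apply le_INR.
    replace (mul (inv x) z) with (mul (mul (inv x) y) (mul (inv y) z)); [apply len_mul|].
    rewrite <- grp_assoc, (grp_assoc y), grp_mul_Vr, grp_mul_1l. reflexivity.
  - intros g x y. rewrite grp_quotient_translate. reflexivity.
  - intros x r. destruct (INR_unbounded r) as [N HN].
    destruct (len_balls N) as [l Hl]. exists (map (mul x) l).
    intros y Hy. apply in_map_iff. exists (mul (inv x) y). split.
    + rewrite grp_assoc, grp_mul_Vr, grp_mul_1l. reflexivity.
    + apply Hl, INR_le. lra.
Qed.

End LengthMetric.

Inductive short_word (A : list G) : nat -> G -> Prop :=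
  | word_unit n : short_word A n e
  | word_snoc n g a : short_word A n g -> In a A -> short_word A (S n) (mul g a).

Lemma short_word_le A n m g : n <= m -> short_word A n g -> short_word A m g.
Proof.
  intros Hnm Hg. revert m Hnm. induction Hg as [n|n g a _ IH Ha]; intros m Hnm.
  - apply word_unit.
  - destruct m as [|m]; [lia|]. apply word_snoc; [apply IH; lia | exact Ha].
Qed.

Lemma short_word_incl A B n g : incl A B -> short_word A n g -> short_word B n g.
Proof.
  intros HAB Hg. induction Hg as [n|n g a _ IH Ha].
  - apply word_unit.
  - apply word_snoc; [exact IH | apply HAB, Ha].
Qed.

Lemma short_word_mul A n m g h :
  short_word A n g -> short_word A m h -> short_word A (n + m) (mul g h).
Proof.
  intros Hg Hh. induction Hh as [m|m h a _ IH Ha].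
  - rewrite grp_mul_1r. apply short_word_le with n; [lia | exact Hg].
  - rewrite grp_assoc, Nat.add_succ_r. apply word_snoc; assumption.
Qed.

Lemma short_word_inv A n g :
  (forall a, In a A -> In (inv a) A) -> short_word A n g -> short_word A n (inv g).
Proof.
  intros HA Hg. induction Hg as [n|n g a _ IH Ha].
  - rewrite grp_inv_1. apply word_unit.
  - rewrite grp_inv_mul. change (S n) with (1 + n). apply short_word_mul; [|exact IH].
    rewrite <- (grp_mul_1l (inv a)). apply word_snoc; [apply word_unit | apply HA, Ha].
Qed.

Lemma short_word_zero A g : short_word A 0 g -> g = e.
Proof. intros Hg. inversion Hg. reflexivity. Qed.

Fixpoint words (A : list G) (n : nat) : list G :=
  match n with
  | 0 => e :: nil
  | S n' => words A n' ++ flat_map (fun g => map (mul g) A) (words A n')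
  end.

Lemma words_length A n : length (words A n) = (length A + 1) ^ n.
Proof.
  induction n as [|n IH]; [reflexivity|]. cbn [words].
  rewrite length_app, (flat_map_constant_length (c := length A)), IH; [|intros; apply length_map].
  rewrite Nat.pow_succ_r'. ring.
Qed.

Lemma short_word_in_words A n g : short_word A n g -> In g (words A n).
Proof.
  intros Hg. induction Hg as [n|n g a _ IH Ha].
  - induction n as [|n IHn]; [left; reflexivity|]. apply in_or_app. left. exact IHn.
  - cbn [words]. apply in_or_app. right. apply in_flat_map. exists g.
    split; [exact IH | apply in_map, Ha].
Qed.

(* Doubling step: a letter a outside <l> doubles a duplicate-free list s of
   elements of <l>, since s and a s are disjoint subsets of <l ++ [a]>. *)
Lemma doubling (l s : list G) (a : G) :
  ~ Gen l a -> NoDup s -> (forall x, In x s -> Gen l x) ->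
  NoDup (s ++ map (mul a) s) /\
  (forall x, In x (s ++ map (mul a) s) -> Gen (l ++ a :: nil) x).
Proof.
  intros Ha Hs Hsl.
  assert (Hincl : incl l (l ++ a :: nil)) by (apply incl_appl, incl_refl).
  split.
  - apply NoDup_app; [exact Hs | | ].
    + apply NoDup_map_NoDup_ForallPairs; [|exact Hs].
      intros x y _ _. apply grp_cancel_l.
    + intros x Hx Hax. apply in_map_iff in Hax as [y [<- Hy]]. apply Ha.
      replace a with (mul (mul a y) (inv y))
        by (rewrite <- grp_assoc, grp_mul_Vr, grp_mul_1r; reflexivity).
      apply gen_mul; [apply Hsl, Hx | apply gen_inv, Hsl, Hy].
  - intros x Hx. apply in_app_or in Hx as [Hx|Hx].
    + apply gen_subgroup_incl with l; [exact Hincl | apply Hsl, Hx].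
    + apply in_map_iff in Hx as [y [<- Hy]]. apply gen_mul.
      * apply gen_base, in_or_app. right. left. reflexivity.
      * apply gen_subgroup_incl with l; [exact Hincl | apply Hsl, Hy].
Qed.

Section WildMetric.
Hypothesis not_finitely_generated : forall l : list G, exists x, ~ Gen l x.
Variable code : G -> nat.
Hypothesis code_inj : forall x y, code x = code y -> x = y.

Definition fresh (l : list G) : G := epsilon (inhabits e) (fun x => ~ Gen l x).

Lemma fresh_spec l : ~ Gen l (fresh l).
Proof. exact (epsilon_spec (inhabits e) _ (not_finitely_generated l)). Qed.

Definition decode (n : nat) : G := epsilon (inhabits e) (fun x => code x = n).

Lemma decode_code x : decode (code x) = x.
Proof.
  apply code_inj.
  exact (epsilon_spec (inhabits e) (fun y => code y = code x) (ex_intro _ x eq_refl)).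
Qed.

Fixpoint add_fresh (n : nat) (l : list G) : list G :=
  match n with 0 => l | S n' => add_fresh n' (l ++ fresh l :: nil) end.

Fixpoint level (j : nat) : list G :=
  add_fresh (2 ^ j) ((match j with 0 => nil | S j' => level j' end) ++ decode j :: nil).

Lemma add_fresh_incl n l : incl l (add_fresh n l).
Proof.
  revert l. induction n as [|n IH]; intros l; [apply incl_refl|].
  eapply incl_tran; [|apply IH]. apply incl_appl, incl_refl.
Qed.

Lemma add_fresh_length n l : length (add_fresh n l) = length l + n.
Proof.
  revert l. induction n as [|n IH]; intros l; cbn [add_fresh]; [lia|].
  rewrite IH, length_app. cbn. lia.
Qed.

Lemma add_fresh_doubling m l s :
  NoDup s -> (forall x, In x s -> Gen l x) ->
  exists s', NoDup s' /\ (forall x, In x s' -> Gen (add_fresh m l) x) /\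
             length s' = length s * 2 ^ m.
Proof.
  revert l s. induction m as [|m IH]; intros l s Hs Hsl.
  - exists s. repeat split; [exact Hs | exact Hsl | cbn; lia].
  - destruct (doubling l s (fresh l) (fresh_spec l) Hs Hsl) as [Hs2 Hsl2].
    destruct (IH _ _ Hs2 Hsl2) as [s' [Hs' [Hs'l Hlen]]].
    exists s'. repeat split; [exact Hs' | exact Hs'l |].
    rewrite Hlen, length_app, length_map, Nat.pow_succ_r'. ring.
Qed.

Lemma level_length j : length (level j) <= 2 ^ (j + 2).
Proof.
  induction j as [|j IH]; [cbn; lia|].
  cbn [level]. rewrite add_fresh_length, length_app. cbn [length].
  replace (S j + 2) with (S (j + 2)) by lia.
  rewrite (Nat.pow_succ_r' 2 (j + 2)), (Nat.pow_add_r 2 j 2) in *.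
  assert (Hpos : 1 <= 2 ^ j) by (apply (Nat.pow_le_mono_r 2 0); lia).
  cbn [Nat.pow] in *. lia.
Qed.

Lemma level_mono i j : i <= j -> incl (level i) (level j).
Proof.
  induction 1 as [|j _ IH]; [apply incl_refl|].
  eapply incl_tran; [exact IH|]. cbn [level].
  eapply incl_tran; [|apply add_fresh_incl]. apply incl_appl, incl_refl.
Qed.

Lemma decode_in_level j : In (decode j) (level j).
Proof.
  destruct j; cbn [level]; apply add_fresh_incl, in_or_app; right; left; reflexivity.
Qed.

Lemma level_subgroup_large j :
  exists s, NoDup s /\ (forall x, In x s -> Gen (level j) x) /\ length s = 2 ^ (2 ^ j).
Proof.
  destruct (add_fresh_doubling (2 ^ j)
              ((match j with 0 => nil | S j' => level j' end) ++ decode j :: nil)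
              (e :: nil)) as [s [Hs [Hsl Hlen]]].
  - constructor; [intros [] | constructor].
  - intros x [<-|[]]. apply gen_unit.
  - exists s. repeat split; [exact Hs | | rewrite Hlen; cbn; lia].
    intros x Hx. specialize (Hsl x Hx). destruct j; exact Hsl.
Qed.

Definition letters (L : nat) : list G := level L ++ map inv (level L).

Lemma letters_inv_closed L a : In a (letters L) -> In (inv a) (letters L).
Proof.
  intros Ha. apply in_app_or in Ha as [Ha|Ha]; apply in_or_app.
  - right. apply in_map, Ha.
  - left. apply in_map_iff in Ha as [b [<- Hb]]. rewrite grp_inv_inv. exact Hb.
Qed.

Lemma letters_mono L L' : L <= L' -> incl (letters L) (letters L').
Proof.
  intros HL. apply incl_app.
  - apply incl_appl, level_mono, HL.
  - apply incl_appr, incl_map, level_mono, HL.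
Qed.

Definition short (L : nat) (g : G) : Prop := short_word (letters L) L g.

Lemma short_mono L L' g : L <= L' -> short L g -> short L' g.
Proof.
  intros HL Hg. apply short_word_le with L; [exact HL|].
  apply short_word_incl with (letters L); [apply letters_mono, HL | exact Hg].
Qed.

Lemma letter_short j x : In x (level j) -> short (S j) x.
Proof.
  intros Hx. apply short_word_incl with (letters j); [apply letters_mono; lia|].
  apply short_word_le with 1; [lia|].
  rewrite <- (grp_mul_1l x). apply word_snoc; [apply word_unit | apply in_or_app; left; exact Hx].
Qed.

Definition wlen (g : G) : nat :=
  epsilon (inhabits 0) (fun L => short L g /\ forall m, short m g -> L <= m).

Lemma wlen_spec g : short (wlen g) g /\ forall m, short m g -> wlen g <= m.
Proof.
  unfold wlen. apply epsilon_spec.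
  assert (Hex : exists L, short L g).
  { exists (S (code g)). apply letter_short.
    pose proof (decode_in_level (code g)) as Hg. rewrite decode_code in Hg. exact Hg. }
  destruct (dec_inh_nat_subset_has_unique_least_element _ (fun L => classic (short L g)) Hex)
    as [L [HL _]].
  exists L. exact HL.
Qed.

Lemma wlen_short g : short (wlen g) g.
Proof. apply wlen_spec. Qed.

Lemma wlen_least g m : short m g -> wlen g <= m.
Proof. apply wlen_spec. Qed.

Definition wdist : G -> G -> R := len_dist wlen.

Lemma wdist_proper : proper_left_invariant_metric mul wdist.
Proof.
  apply len_dist_proper.
  - apply Nat.le_0_r, wlen_least, word_unit.
  - intros g Hg. apply (short_word_zero (letters 0)). rewrite <- Hg. apply wlen_short.
  - intros g. apply wlen_least, short_word_inv; [apply letters_inv_closed | apply wlen_short].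
  - intros g h. apply wlen_least, short_word_mul.
    + apply short_word_incl with (letters (wlen g)); [apply letters_mono; lia|].
      apply wlen_short.
    + apply short_word_incl with (letters (wlen h)); [apply letters_mono; lia|].
      apply wlen_short.
  - intros N. exists (words (letters N) N). intros g Hg.
    apply short_word_in_words, short_mono with (wlen g); [exact Hg | apply wlen_short].
Qed.

Lemma wdist_from_e g : wdist e g = INR (wlen g).
Proof. unfold wdist, len_dist. rewrite grp_inv_1, grp_mul_1l. reflexivity. Qed.

Lemma level_in_component j g :
  Gen (level j) g -> scale_chain wdist (INR (j + 2)) e g.
Proof.
  destruct wdist_proper as [[_ [_ [Hsym _]]] [Hinv _]].
  apply gen_subgroup_in_component; [exact Hsym | exact Hinv |].
  intros x Hx. rewrite wdist_from_e. apply lt_INR.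
  pose proof (wlen_least x (S j) (letter_short j x Hx)). lia.
Qed.

Lemma asdim_zero_bounds_levels :
  asdimAN_zero wdist ->
  exists M, forall j g, Gen (level j) g -> wlen g <= M * (j + 3).
Proof.
  intros [C [k [HC Hbound]]].
  destruct (INR_unbounded (Rmax C k)) as [M HM].
  assert (HCM : (C <= INR M)%R) by (pose proof (Rmax_l C k); lra).
  assert (HkM : (k <= INR M)%R) by (pose proof (Rmax_r C k); lra).
  exists M. intros j g Hg.
  assert (Hs : (0 < INR (j + 2))%R) by (apply lt_0_INR; lia).
  pose proof (Hbound _ Hs e g (level_in_component j g Hg)) as Hdist.
  rewrite wdist_from_e in Hdist.
  apply INR_le. rewrite mult_INR, !plus_INR in *. cbn [INR] in *.
  pose proof (pos_INR j). nra.
Qed.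

Lemma words_letters_count D : (length (letters D) + 1) ^ D <= 2 ^ ((D + 4) * D).
Proof.
  rewrite Nat.pow_mul_r. apply Nat.pow_le_mono_l.
  unfold letters. rewrite length_app, length_map.
  pose proof (level_length D).
  replace (D + 4) with (S (S (D + 2))) by lia. rewrite !Nat.pow_succ_r'.
  assert (1 <= 2 ^ (D + 2)) by (apply (Nat.pow_le_mono_r 2 0); lia).
  lia.
Qed.

(* Counting: the 2^(2^j) elements of <level j> found by doubling would all be
   words of length D = M(j+3) over the letters of weight D, of which there are
   at most 2^((D+4)D) < 2^(2^j). *)
Lemma wdist_not_asdim_zero : ~ asdimAN_zero wdist.
Proof.
  intros Hasdim.
  destruct (asdim_zero_bounds_levels Hasdim) as [M HM].
  destruct (exponential_beats_quadratic M) as [j Hj].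
  set (D := M * (j + 3)) in Hj.
  destruct (level_subgroup_large j) as [s [Hs [Hsl Hlen]]].
  assert (Hwords : incl s (words (letters D) D)).
  { intros g Hg. apply short_word_in_words, short_mono with (wlen g).
    - apply HM, Hsl, Hg.
    - apply wlen_short. }
  pose proof (NoDup_incl_length Hs Hwords) as Hcount.
  rewrite words_length, Hlen in Hcount.
  pose proof (Nat.le_trans _ _ _ Hcount (words_letters_count D)) as Hexp.
  apply Nat.pow_le_mono_r_iff in Hexp; lia.
Qed.

Lemma wild_metric_exists :
  exists d, proper_left_invariant_metric mul d /\ ~ asdimAN_zero d.
Proof. exists wdist. split; [exact wdist_proper | exact wdist_not_asdim_zero]. Qed.

End WildMetric.

End GroupFacts.

Lemma locally_finite_not_finitely_generated (G : Type) (mul : G -> G -> G)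
    (inv : G -> G) (e : G) :
  locally_finite mul inv e -> ~ finite_type G ->
  forall l : list G, exists x, ~ gen_subgroup mul inv e l x.
Proof.
  intros Hlf Hinf l. apply not_all_ex_not. intros Hall. apply Hinf.
  destruct (Hlf l) as [l' Hl']. exists l'. intros x. apply Hl', Hall.
Qed.

Theorem mainTheorem12 (G : Type) (mul : G -> G -> G) (inv : G -> G) (e : G) :
  is_group mul inv e ->
  countable_type G ->
  locally_finite mul inv e ->
  (finite_type G <->
   forall d : G -> G -> R, proper_left_invariant_metric mul d -> asdimAN_zero d).
Proof.
  intros Hgroup [code Hcode] Hlf. split.
  - intros Hfin d _. apply bounded_asdimAN_zero, finite_type_bounded, Hfin.
  - intros Hall. apply NNPP. intros Hinf.
    pose proof (locally_finite_not_finitely_generated G mul inv e Hlf Hinf) as Hnfg.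
    destruct (wild_metric_exists G mul inv e Hgroup Hnfg code Hcode) as [d [Hproper Hwild]].
    exact (Hwild (Hall d Hproper)).
Qed.
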